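(* Let $\mathcal{R}$ be a left-linear TRS, $M$ the set automaton constructed from $\mathcal{R}$, $t_0$ a ground term and $\mathit{select}$ a strategy. If $\textsc{Normalize}(t_0,\mathit{select})$ returns a term $t$, then $t$ is a normal form of $t_0$, i.e. $t_0\to^* t$ and $t$ has no redexes.
   Context: Terms: $\mathbb{F}$ finite ranked alphabet with arity $\#$, $\mathbb{V}$ variables. Positions are finite lists of positive integers; $\epsilon$ empty, $p.q$ concatenation. $\mathcal{D}(t)$ positions of $t$, $\mathcal{E}(t)$ variable positions, $t|_p$ subterm, $t[u]_p$ replacement, $\mathrm{hd}(t)$ head symbol. A TRS $\mathcal{R}$ is a finite nonempty set of rules $\ell\to r$ ($\ell\notin\mathbb{V}$, $\mathrm{vars}(r)\subseteq\mathrm{vars}(\ell)$), with left-hand sides $\mathcal{L}$; left-linear means no variable occurs twice in any left-hand side. A redex of $t$ is $(\ell\to r)@p$ with $\ell\to r\in\mathcal{R}$ and $t|_p=\ell^\sigma$ for some $\sigma$; $t[(\ell\to r)@p]$ denotes $t[r^\sigma]_p$; $\to$ is one-step rewriting, $\to^*$ its reflexive-transitive closure; a normal form has no redexes. Set automaton construction. $\mathrm{sub}(\mathcal{L})$: subterms $\ell|_q$, $\ell\in\mathcal{L}$, $q\in\mathcal{D}(\ell)\setminus\mathcal{E}(\ell)$. A match goal $\ell_1@p_1,\dots,\ell_n@p_n\hookrightarrow\ell@p$ ($n\ge1$) has nonempty obligation $mo=\{\ell_i@p_i\}$ ($\ell_i\in\mathrm{sub}(\mathcal{L})$) and announcement $\ell@p$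 ($\ell\in\mathcal{L}$); $\mathrm{pos}(mo)=\{p_i\}$. States are nonempty sets of goals; $s_0=\{\ell@\epsilon\hookrightarrow\ell@\epsilon\mid\ell\in\mathcal{L}\}$; $S$ = states reachable from $s_0$. Each state $s$ has a fixed label $L(s)\in\mathrm{pos}(mo)$ for some goal $mo\hookrightarrow\ell@\epsilon\in s$. $\mathrm{reduce}(mo,f,p)=\{\ell'@q\in mo\mid q\ne p\}\cup\{\ell'|_i@p.i\mid\ell'@p\in mo,1\le i\le\#f,\ell'|_i\notin\mathbb{V}\}$. $\mathrm{deriv}(s,f)$ is the union of $\{\mathrm{reduce}(mo,f,L(s))\hookrightarrow ma\mid mo\hookrightarrow ma\in s,\exists\ell'.\ell'@L(s)\in mo\wedge\mathrm{hd}(\ell')=f,\mathrm{reduce}(mo,f,L(s))\ne\emptyset\}$, $\{mo\hookrightarrow ma\in s\mid L(s)\notin\mathrm{pos}(mo)\}$ and $\{\ell@L(s).i\hookrightarrow\ell@L(s).i\mid\ell\in\mathcal{L},1\le i\le\#f\}$. Goals are directly dependent if their obligation positions intersect; dependency is its transitive closure. For a dependency class $K$ of $\mathrm{deriv}(s,f)$, $\mathrm{gcp}(K)$ is the greatest common prefix of its announcement positions and $\mathrm{lift}(K)$ removes that prefix from all positions in $K$. $\delta(s,f)=\{(\mathrm{lift}(K),\mathrm{gcp}(K))\mid K\}$; $\mathit{out}(s,f)=\{(\ell\to r)@p\mid\ell\to r\in\mathcal{R},f(x_1,\dots,x_{\#f})@L(s)\hookrightarrow\ell@p\in s,x_i\in\mathbb{V}\}$.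 Configuration trees: $ct::=\mathit{bud}(s,p)\mid\mathit{node}(s,p,cts)$, $cts$ a finite possibly empty set of configuration trees; $\mathit{buds}(ct)$, $\mathit{nodes}(ct)$ are the configurations labelling bud/node vertices. $\mathit{grow}(ct,s,p,t)$ replaces every $\mathit{bud}(s,p)$ in $ct$ by $\mathit{node}(s,p,\{\mathit{bud}(s',p.p')\mid(s',p')\in\delta(s,\mathrm{hd}(t|_{p.L(s)}))\})$. $\mathit{prune}(\mathit{bud}(s,p),q)=\mathit{bud}(s,p)$; $\mathit{prune}(\mathit{node}(s,p,cts),q)=\mathit{bud}(s,p)$ if $p.L(s)=q$, else $\mathit{node}(s,p,\{\mathit{prune}(c,q)\mid c\in cts\})$. $ct[p]$ is the subtree of $ct$ whose root configuration $(s,q)$ has $q.L(s)=p$. $\mathit{matches}(s,p,t)=\{(\ell\to r)@p.q\mid(\ell\to r)@q\in\mathit{out}(s,\mathrm{hd}(t|_{p.L(s)}))\}$. Strategy: a partial function $\mathit{select}$ mapping $(ct,reds)$ with $\mathit{buds}(ct)\cup reds\neq\emptyset$ to an element of $\mathit{buds}(ct)\cup reds$. Procedure $\textsc{Normalize}(t_0,\mathit{select})$: set $t:=t_0$, $reds:=\emptyset$, $ct:=\mathit{bud}(s_0,\epsilon)$. While $\mathit{buds}(ct)\ne\emptyset$ or $reds\ne\emptyset$: let $a=\mathit{select}(ct,reds)$. If $a$ is a configuration $(s,p)$: $ct:=\mathit{grow}(ct,s,p,t)$, then $reds:=reds\cup\mathit{matches}(s,p,t)$. If $a$ is a redex $(\ell\to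 r)@p\in reds$: $reds:=reds\setminus\bigcup\{\mathit{matches}(s,q,t)\mid(s,q)\in\mathit{nodes}(ct[p])\}$, then $ct:=\mathit{prune}(ct,p)$, then $t:=t[(\ell\to r)@p]$. After the loop, return $t$. *)

From HB Require Import structures.
From mathcomp Require Import ssreflect ssrfun ssrbool eqtype ssrnat seq choice.
From mathcomp Require Import fintype fingraph finmap.
From Stdlib Require Import Relation_Operators.
From Stdlib Require List.
Set Implicit Arguments. Unset Strict Implicit. Unset Printing Implicit Defensive.
Local Open Scope fset_scope.

Section Terms.
Variables (F : finType) (V : countType).

Inductive term := Var of V | App of F & seq term.

Fixpoint term_enc (t : term) : GenTree.tree (V + F) := match t with
 | Var x => GenTree.Leaf (inl x)
 | App f ts => GenTree.Node 0 (GenTree.Leaf (inr f) :: map term_enc ts) end.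
Fixpoint term_dec (u : GenTree.tree (V + F)) : option term := match u with
 | GenTree.Leaf (inl x) => Some (Var x)
 | GenTree.Node _ (GenTree.Leaf (inr f) :: us) => Some (App f (pmap term_dec us))
 | _ => None end.
Lemma term_encK : forall t, term_dec (term_enc t) = Some t.
Proof.
fix IH 1 => -[x|f ts] //=. congr (Some (App f _)).
elim: ts => //= u us IHus. by rewrite IH IHus.
Qed.
End Terms.

HB.instance Definition _ (F : finType) (V : countType) :=
  Countable.copy (term F V) (pcan_type (@term_encK F V : pcancel _ _)).

(* Positions: finite lists of positive integers; [::] is epsilon,
   p ++ q is concatenation p.q.  Child indices are 1-based. *)
Definition pos := seq nat.

Section TRS.
Variables (F : finType) (V : countType) (arity : F -> nat).
Notation term := (term F V).

Fixpoint subterm (t : term) (p : pos) : option term := match p with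
 | [::] => Some t
 | i :: q => match t with
   | Var _ => None
   | App f ts => if (0 < i) && (i <= size ts) then subterm (nth t ts i.-1) q else None
   end end.

(* t[u]_p (t unchanged when p is not a position of t) *)
Fixpoint replace (t : term) (p : pos) (u : term) : term := match p with
 | [::] => u
 | i :: q => match t with
   | Var _ => t
   | App f ts => if (0 < i) && (i <= size ts)
                 then App f (set_nth t ts i.-1 (replace (nth t ts i.-1) q u))
                 else t
   end end.

Definition hd (t : term) : option F := if t is App f _ then Some f else None.

Fixpoint subst (sigma : V -> term) (t : term) : term := match t with
 | Var x => sigma x
 | App f ts => App f (map (subst sigma) ts) end.

Fixpoint vars (t : term) : seq V := match t with
 | Var x => [:: x]
 | App _ ts => flatten (map vars ts) end.

Fixpoint wf (t : term) : bool := match t with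
 | Var _ => true
 | App f ts => (size ts == arity f) && all wf ts end.

Definition ground (t : term) : bool := vars t == [::].

Definition is_var (t : term) : bool := if t is Var _ then true else false.

Definition rule := (term * term)%type.
Definition redex := (rule * pos)%type.

Definition is_trs (R : {fset rule}) : Prop :=
  R != fset0 /\
  forall rl, rl \in R ->
    [/\ ~~ is_var rl.1, wf rl.1, wf rl.2 & {subset vars rl.2 <= vars rl.1}].

Definition left_linear (R : {fset rule}) : Prop :=
  forall rl, rl \in R -> uniq (vars rl.1).

Definition rstep (R : {fset rule}) (t t' : term) : Prop :=
  exists (rl : rule) (p : pos) (sigma : V -> term),
    [/\ rl \in R, subterm t p = Some (subst sigma rl.1)
      & t' = replace t p (subst sigma rl.2)].

Definition is_redex (R : {fset rule}) (t : term) (rd : redex) : Prop :=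
  rd.1 \in R /\ exists sigma : V -> term, subterm t rd.2 = Some (subst sigma rd.1.1).

Definition normal_form (R : {fset rule}) (t : term) : Prop :=
  forall rd : redex, ~ is_redex R t rd.

(* a match obligation is a set of l@p, a match goal is  mo ~> l@p *)
Definition obl := {fset (term * pos)}.
Definition goal := (obl * (term * pos))%type.
Definition state := {fset goal}.

Definition lhss (R : {fset rule}) : {fset term} := [fset rl.1 | rl in R].

Definition s0 (R : {fset rule}) : state :=
  [fset ([fset (l, [::])], (l, [::])) | l in lhss R].

Definition posm (mo : obl) : {fset pos} := [fset x.2 | x in mo].

Definition reduce (mo : obl) (f : F) (p : pos) : obl :=
  [fset x in mo | x.2 != p] `|`
  [fset y | y in
     flatten [seq flatten [seq (if x.2 == p then
                                  match subterm x.1 [:: i] with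
                                  | Some u => if is_var u then [::] else [:: (u, p ++ [:: i])]
                                  | None => [::] end
                                else [::]) | i <- iota 1 (arity f)]
             | x <- enum_fset mo]].

Section Automaton.
Variables (lab : state -> pos) (R : {fset rule}).

Definition deriv (s : state) (f : F) : {fset goal} :=
  [fset (reduce g.1 f (lab s), g.2) | g in s &
      has (fun x => (x.2 == lab s) && (hd x.1 == Some f)) (enum_fset g.1)
      && (reduce g.1 f (lab s) != fset0)]
  `|` [fset g in s | lab s \notin posm g.1]
  `|` [fset y | y in [seq ([fset (l, lab s ++ [:: i])], (l, lab s ++ [:: i]))
                     | l <- enum_fset (lhss R), i <- iota 1 (arity f)]].

Definition ddep (g g' : goal) : bool := posm g.1 `&` posm g'.1 != fset0.

Definition dclass (D : {fset goal}) (x : D) : {fset goal} :=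
  [fsetval y in {: D} | connect (fun a b : D => ddep (val a) (val b)) x y].

Definition dclasses (D : {fset goal}) : {fset {fset goal}} :=
  [fset dclass x | x in {: D}].

Fixpoint lcp (p q : pos) : pos := match p, q with
 | i :: p', j :: q' => if i == j then i :: lcp p' q' else [::]
 | _, _ => [::] end.

Definition gcp (K : {fset goal}) : pos :=
  match [seq g.2.2 | g <- enum_fset K] with
  | [::] => [::]
  | p :: ps => foldl lcp p ps end.

Definition liftK (K : {fset goal}) : state :=
  let n := size (gcp K) in
  [fset ([fset (x.1, drop n x.2) | x in (g : goal).1], (g.2.1, drop n g.2.2)) | g in K].

Definition delta (s : state) (f : F) : {fset (state * pos)} :=
  [fset (liftK K, gcp K) | K in dclasses (deriv s f)].

Definition flat (f : F) (u : term) : bool :=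
  if u is App g us then (g == f) && (size us == arity f) && all is_var us else false.

Definition out (s : state) (f : F) : {fset redex} :=
  [fset y | y in [seq (rl, g.2.2) | rl <- enum_fset R,
      g <- [seq g <- enum_fset s | (g.2.1 == rl.1) &&
        has (fun x => (g.1 == [fset x]) && (x.2 == lab s) && flat f x.1)
            (enum_fset g.1)]]].

Inductive reachable : state -> Prop :=
 | reach0 : reachable (s0 R)
 | reachS s f s' p' : reachable s -> (s', p') \in delta s f -> reachable s'.

Definition label_ok : Prop :=
  forall s, reachable s ->
    exists2 g, g \in s & (g.2.2 == [::]) && (lab s \in posm g.1).

(* The children of a node are a finite set; they are represented by a
   list, and strategies are required to be insensitive to the order /
   repetitions of that list (see [cteq] and [is_strategy]). *)
Inductive ctree := Bud of state & pos | Node of state & pos & seq ctree.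

Fixpoint buds_seq (c : ctree) : seq (state * pos) := match c with
 | Bud s p => [:: (s, p)]
 | Node _ _ cs => flatten (map buds_seq cs) end.
Fixpoint nodes_seq (c : ctree) : seq (state * pos) := match c with
 | Bud _ _ => [::]
 | Node s p cs => (s, p) :: flatten (map nodes_seq cs) end.
Definition buds (c : ctree) : {fset (state * pos)} := [fset x | x in buds_seq c].
Definition nodes (c : ctree) : {fset (state * pos)} := [fset x | x in nodes_seq c].

(* the same configuration tree, children read as sets *)
Inductive cteq : ctree -> ctree -> Prop :=
 | cteq_bud s p : cteq (Bud s p) (Bud s p)
 | cteq_node s p cs1 cs2 :
     (forall c1, List.In c1 cs1 -> exists c2, List.In c2 cs2 /\ cteq c1 c2) ->
     (forall c2, List.In c2 cs2 -> exists c1, List.In c1 cs1 /\ cteq c1 c2) ->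
     cteq (Node s p cs1) (Node s p cs2).

(* grow(ct, s, p, t) where f = hd(t|_{p.L(s)}) *)
Fixpoint grow (s : state) (p : pos) (f : F) (c : ctree) : ctree := match c with
 | Bud s' p' => if (s' == s) && (p' == p)
                then Node s p [seq Bud x.1 (p ++ x.2) | x <- enum_fset (delta s f)]
                else c
 | Node s' p' cs => Node s' p' (map (grow s p f) cs) end.

Fixpoint prune (q : pos) (c : ctree) : ctree := match c with
 | Bud _ _ => c
 | Node s p cs => if p ++ lab s == q then Bud s p else Node s p (map (prune q) cs) end.

Fixpoint subtrees_at (p : pos) (c : ctree) : seq ctree := match c with
 | Bud s q => if q ++ lab s == p then [:: c] else [::]
 | Node s q cs => (if q ++ lab s == p then [:: c] else [::])
                  ++ flatten (map (subtrees_at p) cs) end.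

Definition nodes_at (p : pos) (c : ctree) : {fset (state * pos)} :=
  [fset x | x in flatten [seq nodes_seq c' | c' <- subtrees_at p c]].

Definition matches (s : state) (p : pos) (t : term) : {fset redex} :=
  match obind hd (subterm t (p ++ lab s)) with
  | Some f => [fset (x.1, p ++ x.2) | x in out s f]
  | None => fset0 end.

Inductive action := AConf of state & pos | ARed of redex.

Definition act_in (c : ctree) (reds : {fset redex}) (a : action) : bool :=
  match a with
  | AConf s p => (s, p) \in buds c
  | ARed rd => rd \in reds end.

(* select : partial function (None = undefined) returning an element of
   buds(ct) U reds; it only depends on ct as a tree with sets of children *)
Definition is_strategy (select : ctree -> {fset redex} -> option action) : Prop :=
  (forall c reds a, select c reds = Some a -> act_in c reds a) /\
  (forall c1 c2 reds, cteq c1 c2 -> select c1 reds = select c2 reds).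

Definition mstate := (term * {fset redex} * ctree)%type.

Inductive nstep (select : ctree -> {fset redex} -> option action) :
    mstate -> mstate -> Prop :=
 | nstep_grow t reds c s p f args :
     (buds c != fset0) || (reds != fset0) ->
     select c reds = Some (AConf s p) ->
     subterm t (p ++ lab s) = Some (App f args) ->
     nstep select (t, reds, c) (t, reds `|` matches s p t, grow s p f c)
 | nstep_red t reds c l r p (sigma : V -> term) :
     (buds c != fset0) || (reds != fset0) ->
     select c reds = Some (ARed ((l, r), p)) ->
     subterm t p = Some (subst sigma l) ->
     nstep select (t, reds, c)
       (replace t p (subst sigma r),
        reds `\` \bigcup_(x <- enum_fset (nodes_at p c)) matches x.1 x.2 t,
        prune p c).

Definition normalize_returns (select : ctree -> {fset redex} -> option action)
    (t0 t : term) : Prop :=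
  exists (reds : {fset redex}) (c : ctree),
    [/\ clos_refl_trans mstate (nstep select) (t0, fset0, Bud (s0 R) [::]) (t, reds, c),
        buds c = fset0 & reds = fset0].

End Automaton.
End TRS.

From Pilot Require Import Defs.
From HB Require Import structures.
From mathcomp Require Import ssreflect ssrfun ssrbool eqtype ssrnat seq choice.
From mathcomp Require Import fintype fingraph finmap.
From Stdlib Require Import Relation_Operators.
Set Implicit Arguments. Unset Strict Implicit. Unset Printing Implicit Defensive.
Local Open Scope fset_scope.

(* Every contraction performed by Normalize is a rewrite step of the current
   term, so only normality of the result needs an argument.  The loop keeps
   the invariant that every redex of the current term is either pending in
   [reds] or covered by a bud of the configuration tree, i.e. announced by a
   goal of the bud's state or lying strictly below one of its pending match
   obligations.  Growing a bud preserves it: one transition of the set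
   automaton either reports a covered redex as a match or hands it to a goal of
   a child state.  After rewriting at [p], a redex of the new term is located
   again in the pruned tree: either it is covered by a bud (in particular by the
   new bud at [p]), or it is reported by a surviving node.  All head symbols
   inspected for the latter lie outside the rewritten subterm, so by
   left-linearity it was already a redex of the old term, and the old invariant
   puts it in [reds] or below a bud; pruning keeps such a bud or replaces it by
   an ancestor bud, and a redex dropped from [reds] was reported inside the
   pruned subtree, hence is covered by the new bud.  On termination there are
   neither pending redexes nor buds. *)

Lemma catI (T : Type) : right_injective (@cat T).
Proof. by move=> p a b /(congr1 (drop (size p))); rewrite !drop_size_cat. Qed.

Lemma prefix_cat_drop (T : eqType) (p y : seq T) : prefix p y -> p ++ drop (size p) y = y.
Proof. by case/prefixP => r ->; rewrite drop_size_cat. Qed.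

Lemma prefix_rcons_inv (T : eqType) (p y : seq T) i :
  prefix p (rcons y i) -> p = rcons y i \/ prefix p y.
Proof.
rewrite !prefixE => /eqP E; case: (leqP (size p) (size y)) => H.
  by right; apply/eqP; rewrite -[RHS]E -cats1 takel_cat.
by left; rewrite -[LHS]E take_oversize // size_rcons.
Qed.

Lemma subset_rcons (T : eqType) (s : seq T) x : {subset s <= rcons s x}.
Proof. by move=> y ys; rewrite mem_rcons inE ys orbT. Qed.

Section Terms.
Variables (F : finType) (V : countType) (arity : F -> nat).
Notation term := (term F V).
Notation wf := (wf arity).

Lemma term_ind_in (P : term -> Prop) :
  (forall x, P (Var _ x)) ->
  (forall f ts, (forall u, u \in ts -> P u) -> P (App f ts)) ->
  forall t, P t.
Proof.
move=> PVar PApp; fix IH 1 => -[x|f ts]; first exact: PVar.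
apply: PApp; elim: ts => [|u us IHus] v; first (rewrite in_nil => /notF []).
by rewrite inE => /predU1P[->|/IHus //]; exact: IH.
Qed.

Definition head_at (t : term) (p : pos) : option F := obind (@hd F V) (subterm t p).

Lemma subterm_cat (t : term) p q :
  subterm t (p ++ q) = obind (fun u => subterm u q) (subterm t p).
Proof. by elim: p t => [|i p IH] [x|f ts] //=; case: ifP. Qed.

Lemma subterm_subst (sigma : V -> term) l c u :
  subterm l c = Some u -> subterm (subst sigma l) c = Some (subst sigma u).
Proof.
elim: c l => [|i c IH] [x|f ls] //=; try by case=> <-.
rewrite size_map; case: ifP => // /andP[i0 ile].
by rewrite (nth_map (App f ls)) ?prednK // => /IH.
Qed.

Lemma subterm_wf (t : term) c u : wf t -> subterm t c = Some u -> wf u.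
Proof.
elim: c t => [|i c IH] [x|f ts] //=; try by move=> ? [<-].
case/andP=> _ /allP wf_ts; case: ifP => // /andP[i0 ile].
by apply/IH/wf_ts/mem_nth; rewrite prednK.
Qed.

Lemma head_at_replace (t : term) p u y :
  subterm t p <> None -> ~~ prefix p y -> head_at (replace t p u) y = head_at t y.
Proof.
rewrite /head_at; elim: p t y => [|i p IH] t y; first by rewrite prefix0s.
case: t => [x|f ts] //=; case: ifP => // /andP[i0 ile] tp.
case: y => [|j y] //=; rewrite size_set_nth (maxn_idPr _) ?prednK //.
case: ifP => // /andP[j0 jle].
rewrite (set_nth_default (App f ts)) ?size_set_nth ?(maxn_idPr _) ?prednK //.
rewrite nth_set_nth /=; have [->|neq_ji] := eqVneq j i; first by rewrite !eqxx; exact: IH.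
suff -> : (j.-1 == i.-1) = false by [].
by apply: contraNF neq_ji => /eqP/(congr1 S); rewrite !prednK // => ->.
Qed.

Lemma wf_replace (t : term) p u : wf t -> wf u -> wf (replace t p u).
Proof.
elim: p t => [|i p IH] [x|f ts] //= /andP[/eqP size_ts /allP wf_ts] wf_u.
case: ifP => [/andP[i0 ile]|_] /=; last by rewrite size_ts eqxx; exact/allP.
rewrite size_set_nth (maxn_idPr _) ?prednK // size_ts eqxx /=.
apply/(all_nthP (App f ts)) => k; rewrite size_set_nth (maxn_idPr _) ?prednK // => kl.
rewrite nth_set_nth /=; case: eqP => _; last exact/wf_ts/mem_nth.
by apply/IH/wf_u/wf_ts/mem_nth; rewrite prednK.
Qed.

Lemma eq_in_subst (s1 s2 : V -> term) l :
  {in vars l, s1 =1 s2} -> subst s1 l = subst s2 l.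
Proof.
elim/term_ind_in: l => [x|f ls IH] eq_s /=; first by apply: eq_s; rewrite inE.
congr App; apply/eq_in_map => v vl; apply: IH => // x xv.
by apply: eq_s; apply/flatten_mapP; exists v.
Qed.

Lemma wf_subst_var (sigma : V -> term) l x :
  wf (subst sigma l) -> x \in vars l -> wf (sigma x).
Proof.
elim/term_ind_in: l => [y|f ls IH] /=; first by move=> ?; rewrite inE => /eqP->.
by case/andP=> _ /allP wf_ls /flatten_mapP[v vl]; apply/IH/wf_ls/map_f.
Qed.

Lemma wf_subst (sigma : V -> term) r :
  wf r -> {in vars r, forall x, wf (sigma x)} -> wf (subst sigma r).
Proof.
elim/term_ind_in: r => [y|f ls IH] /=; first by move=> _; apply; rewrite inE.
case/andP=> /eqP size_ls /allP wf_ls wf_sigma; rewrite size_map size_ls eqxx /=.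
apply/allP => _ /mapP[v vl ->]; apply: IH (wf_ls _ vl) _ => // x xv.
by apply: wf_sigma; apply/flatten_mapP; exists v.
Qed.

Lemma subst_seq_linear (ls ts : seq term) d :
  size ls = size ts -> uniq (flatten (map (@vars F V) ls)) ->
  (forall k, k < size ls -> exists sigma, nth d ts k = subst sigma (nth d ls k)) ->
  exists sigma, ts = map (subst sigma) ls.
Proof.
elim: ls ts => [|l ls IH] [|t ts] //= [size_eq].
rewrite cat_uniq => /and3P[_ disj uniq_ls] inst.
have [s1 /= ->] := inst 0 erefl.
have [s2 ->] : exists sigma, ts = map (subst sigma) ls.
  by apply: IH => // k; exact: (inst k.+1).
exists (fun x => if x \in vars l then s1 x else s2 x); congr cons.
  by apply: eq_in_subst => x ->.
apply/eq_in_map => v vl; apply: eq_in_subst => x xv; case: ifP => // xl.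
by case/hasP: disj; exists x => //; apply/flatten_mapP; exists v.
Qed.

Lemma uniq_vars_nth (ls : seq term) d k :
  uniq (flatten (map (@vars F V) ls)) -> k < size ls -> uniq (vars (nth d ls k)).
Proof.
elim: ls k => [|l ls IH] [|k] //=; rewrite cat_uniq => /and3P[? _ ?] //; exact: IH.
Qed.

Lemma linear_match_heads (l t : term) :
  uniq (vars l) -> wf l -> wf t ->
  (forall c u, subterm l c = Some u -> ~~ is_var u -> head_at t c = hd u) ->
  exists sigma, t = subst sigma l.
Proof.
elim/term_ind_in: l t => [x|f ls IH] t; first by exists (fun _ => t).
move=> /= uniq_l /andP[/eqP size_ls /allP wf_ls] wf_t heads.
have := heads [::] _ erefl isT; rewrite /head_at /=.
case: t wf_t heads => [//|g ts] /= /andP[/eqP size_ts /allP wf_ts] heads [eq_gf].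
subst g.
have [sigma ->] : exists sigma, ts = map (subst sigma) ls; last by exists sigma.
apply: (subst_seq_linear (d := App f ls)) => [|//|k kl]; first by rewrite size_ls size_ts.
have kt : k < size ts by rewrite size_ts -size_ls.
apply: IH; [exact: mem_nth | exact: uniq_vars_nth | exact/wf_ls/mem_nth |
  exact/wf_ts/mem_nth | move=> c u lc nvar_u].
have := heads (k.+1 :: c) u; rewrite /= kl lc => /(_ erefl nvar_u).
by rewrite /head_at /= kt (set_nth_default (App f ls) (App f ts)).
Qed.

End Terms.

Lemma lcp_prefix (p q : pos) : prefix (lcp p q) p && prefix (lcp p q) q.
Proof.
elim: p q => [|i p IH] [|j q] //=; case: eqP => [->|_] //=.
by rewrite !eqxx; exact: IH.
Qed.

Lemma foldl_lcp_prefix (ps : seq pos) p q :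
  q \in p :: ps -> prefix (foldl lcp p ps) q.
Proof.
elim: ps p q => [|r ps IH] p q /=; first by rewrite inE => /eqP->; exact: prefix_refl.
have /andP[lp lr] := lcp_prefix p r; have lcp_lcp := IH (lcp p r) _ (mem_head _ ps).
rewrite !inE => /or3P[/eqP->|/eqP->|qps].
- exact: (prefix_trans lcp_lcp lp).
- exact: (prefix_trans lcp_lcp lr).
- by apply: IH; rewrite inE qps orbT.
Qed.

Section Automaton.
Variables (F : finType) (V : countType) (arity : F -> nat).
Variables (lab : state F V -> pos) (R : {fset rule F V}).
Notation term := (term F V).
Notation goal := (goal F V).
Notation state := (state F V).
Notation obl := (obl F V).
Notation reduce := (reduce arity).
Notation deriv := (deriv arity lab R).
Notation delta := (delta arity lab R).

Lemma gcp_prefix (K : {fset goal}) g : g \in K -> prefix (gcp K) g.2.2.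
Proof.
rewrite /gcp => gK; have : g.2.2 \in [seq g.2.2 | g <- enum_fset K] by exact: map_f.
by case: [seq _ | _ <- _] => // p ps; exact: foldl_lcp_prefix.
Qed.

Lemma lhss_of rl : rl \in R -> rl.1 \in lhss R.
Proof. by move=> rR; apply/imfsetP; exists rl. Qed.

Lemma lhs_nvar_wf l : is_trs arity R -> l \in lhss R -> ~~ is_var l /\ wf arity l.
Proof. by case=> _ trsR /imfsetP[rl /trsR[]] *; subst. Qed.

Lemma posmP (mo : obl) b : reflect (exists u, (u, b) \in mo) (b \in posm mo).
Proof.
apply: (iffP idP) => [/imfsetP[[u b'] ub /= ->]|[u ub]]; first by exists u.
by apply/imfsetP; exists (u, b).
Qed.

Lemma in_reduce (mo : obl) f p x :
  x \in reduce mo f p <->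
  (x \in mo /\ x.2 != p) \/
  exists y u i, [/\ y \in mo, y.2 = p, i \in iota 1 (arity f), subterm y.1 [:: i] = Some u &
                  ~~ is_var u /\ x = (u, p ++ [:: i])].
Proof.
rewrite /reduce !inE; split.
- case/orP => [/andP[? ?]|]; first by left.
  case/flatten_mapP => y ymo /flatten_mapP[i iarity]; case: eqP => // yp.
  case ysub: subterm => [u|] //; case: ifP => // uvar; rewrite inE => /eqP->.
  by right; exists y, u, i; rewrite uvar.
- case=> [[-> ->] //|[y [u [i [ymo yp iarity ysub [uvar ->]]]]]].
  apply/orP; right; apply/flatten_mapP; exists y => //; apply/flatten_mapP; exists i => //.
  by rewrite yp eqxx ysub (negbTE uvar) inE.
Qed.

Definition fresh_goal (l : term) (b : pos) : goal := ([fset (l, b)], (l, b)).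

Lemma in_fresh_goal l b x : x \in (fresh_goal l b).1 -> x = (l, b).
Proof. by rewrite inE => /eqP. Qed.

Lemma posm_fresh_goal l b p : (p \in posm (fresh_goal l b).1) = (p == b).
Proof.
by apply/posmP/eqP => [[u /in_fresh_goal[_ ->]] //|->]; exists l; rewrite inE.
Qed.

Lemma in_deriv s f h : h \in deriv s f <->
  (exists2 g, g \in s & [/\ has (fun x => (x.2 == lab s) && (hd x.1 == Some f)) (enum_fset g.1),
      reduce g.1 f (lab s) != fset0 & h = (reduce g.1 f (lab s), g.2)])
  \/ (h \in s /\ lab s \notin posm h.1)
  \/ (exists l i, [/\ l \in lhss R, i \in iota 1 (arity f) & h = fresh_goal l (lab s ++ [:: i])]).
Proof.
rewrite /deriv !in_fsetU !inE; split.
- case/orP => [/orP[|]|].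
  + by case/imfsetP => g /=; rewrite inE => /andP[gs /andP[? ?]] ->; left; exists g.
  + by move=> /andP[? ?]; right; left.
  + by case/allpairsP => [[l i] [/= ? ? ->]]; right; right; exists l, i.
- case=> [[g gs [has_g red_ne ->]]|[[-> ->]|[l [i [? ? ->]]]]].
  + apply/orP; left; apply/orP; left; apply/imfsetP; exists g => //=.
    by rewrite inE gs has_g red_ne.
  + by rewrite orbT.
  + by apply/orP; right; apply/allpairsP; exists (l, i).
Qed.

Definition goal_ok (g : goal) : Prop :=
  [/\ g.2.1 \in lhss R, g.1 != fset0 &
      forall x, x \in g.1 ->
        exists c, [/\ x.2 = g.2.2 ++ c, subterm g.2.1 c = Some x.1 & ~~ is_var x.1]].

Definition state_ok (s : state) : Prop :=
  (forall g, g \in s -> goal_ok g) /\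
  (forall g x l, g \in s -> x \in g.1 -> l \in lhss R -> fresh_goal l x.2 \in s).

Lemma goal_ok_inj g x y : goal_ok g -> x \in g.1 -> y \in g.1 -> x.2 = y.2 -> x = y.
Proof.
case=> _ _ obl_sub xg yg; have [c [xc lc _]] := obl_sub _ xg.
have [c' [yc' lc' _]] := obl_sub _ yg.
rewrite xc yc' => /catI eq_c; move: lc; rewrite eq_c lc' => -[] x1y1.
by apply: injective_projections; rewrite // xc yc' eq_c.
Qed.

Lemma fresh_goal_ok l b : is_trs arity R -> l \in lhss R -> goal_ok (fresh_goal l b).
Proof.
move=> trsR lR; split => //=; first by apply/fset0Pn; exists (l, b); rewrite inE.
move=> x /in_fresh_goal->; exists [::]; rewrite cats0.
by split => //; case: (lhs_nvar_wf trsR lR).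
Qed.

Lemma deriv_goal_ok s f h : is_trs arity R -> state_ok s -> h \in deriv s f -> goal_ok h.
Proof.
move=> trsR [sok _] /in_deriv[[g gs [_ red_ne ->]]|[[hs _]|[l [i [lR _ ->]]]]];
  [|exact: sok|exact: fresh_goal_ok].
have [gl g_ne obl_sub] := sok _ gs; split => //.
move=> x /in_reduce[[/obl_sub //]|[y [u [i [ygs yl _ yu [uvar ->]]]]]].
have [c [yc lc _]] := obl_sub _ ygs; exists (c ++ [:: i]).
by rewrite /= -yl yc catA subterm_cat lc.
Qed.

Lemma deriv_fresh_closed s f h x l : state_ok s -> h \in deriv s f -> x \in h.1 ->
  l \in lhss R -> fresh_goal l x.2 \in deriv s f.
Proof.
move=> [_ s_fresh] /in_deriv[[g gs [_ _ ->]]|[[hs lab_h]|[l' [i [_ iarity ->]]]]] xh lR.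
- case/in_reduce: xh => [[xg xlab]|[y [u [i [_ yl iarity _ [_ ->]]]]]].
    by apply/in_deriv; right; left; rewrite posm_fresh_goal eq_sym (s_fresh g).
  by apply/in_deriv; right; right; exists l, i; rewrite -yl.
- apply/in_deriv; right; left; split; first exact: (s_fresh h).
  rewrite posm_fresh_goal; apply: contra lab_h => /eqP->.
  by apply/posmP; exists x.1; case: x xh.
- by move/in_fresh_goal: xh => -> /=; apply/in_deriv; right; right; exists l, i.
Qed.

Lemma in_dclass (D : {fset goal}) (x : D) g :
  g \in dclass x <-> exists y : D, g = val y /\ connect (fun a b : D => ddep (val a) (val b)) x y.
Proof.
rewrite /dclass; split.
  by case/imfsetP => y /=; rewrite inE => xy ->; exists y.
by case=> y [-> xy]; apply/imfsetP; exists y; rewrite // inE.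
Qed.

Lemma dclasses_sub (D : {fset goal}) K g : K \in dclasses D -> g \in K -> g \in D.
Proof. by case/imfsetP => x _ -> /in_dclass[y [-> _]]; exact: valP. Qed.

Lemma dclasses_cover (D : {fset goal}) g : g \in D -> exists2 K, K \in dclasses D & g \in K.
Proof.
move=> gD; exists (dclass [` gD]); first by apply/imfsetP; exists [` gD].
by apply/in_dclass; exists [` gD]; rewrite connect0.
Qed.

Lemma dclasses_ddep_closed (D : {fset goal}) K g h :
  K \in dclasses D -> g \in K -> h \in D -> ddep g h -> h \in K.
Proof.
case/imfsetP => x _ -> /in_dclass[y [-> xy]] hD gh.
by apply/in_dclass; exists [` hD]; split => //; apply: connect_trans xy (connect1 _).
Qed.

Definition lift_goal (n : nat) (g : goal) : goal :=
  ([fset (x.1, drop n x.2) | x in g.1], (g.2.1, drop n g.2.2)).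

Lemma in_liftK K g' : g' \in Defs.liftK K <-> exists2 g, g \in K & g' = lift_goal (size (gcp K)) g.
Proof. by split=> [/imfsetP[g gK ->]|[g gK ->]]; [exists g|apply/imfsetP; exists g]. Qed.

Lemma in_delta s f y : y \in delta s f <->
  exists2 K, K \in dclasses (deriv s f) & y = (Defs.liftK K, gcp K).
Proof. by split=> [/imfsetP[K KD ->]|[K KD ->]]; [exists K|apply/imfsetP; exists K]. Qed.

Lemma lift_fresh_goal n l b : lift_goal n (fresh_goal l b) = fresh_goal l (drop n b).
Proof.
congr pair; apply/fsetP => z; apply/imfsetP/idP.
  by case=> x /in_fresh_goal-> ->; rewrite inE.
by rewrite inE => /eqP->; exists (l, b); rewrite ?inE.
Qed.

Lemma lift_goal_spec (P : pos) h : goal_ok h -> prefix P h.2.2 ->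
  let h' := lift_goal (size P) h in
  [/\ h'.2.1 = h.2.1, P ++ h'.2.2 = h.2.2,
      (forall x', x' \in h'.1 -> exists2 x, x \in h.1 & x'.1 = x.1 /\ P ++ x'.2 = x.2) &
      (forall x, x \in h.1 -> exists2 x', x' \in h'.1 & x'.1 = x.1 /\ P ++ x'.2 = x.2)].
Proof.
move=> [_ _ obl_sub] Ph /=.
have Px x : x \in h.1 -> P ++ drop (size P) x.2 = x.2.
  by case/obl_sub=> c [-> _ _]; apply/prefix_cat_drop/prefix_catl.
split; first by []; first exact: prefix_cat_drop.
  by move=> _ /imfsetP[x xh ->]; exists x => //; rewrite Px.
by move=> x xh; exists (x.1, drop (size P) x.2); rewrite ?Px //; apply/imfsetP; exists x.
Qed.

Lemma delta_state_ok s f y : is_trs arity R -> state_ok s -> y \in delta s f -> state_ok y.1.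
Proof.
move=> trsR sok /in_delta[K KD ->] /=.
have Kderiv h : h \in K -> h \in deriv s f by exact: dclasses_sub.
have Kok h : h \in K -> goal_ok h by move/Kderiv; exact: deriv_goal_ok.
split=> [g' | g' x' l] /in_liftK[h hK ->]; have [ann pos_ann lift_obl obl_lift] :=
  lift_goal_spec (Kok _ hK) (gcp_prefix hK); have [hl h_ne obl_sub] := Kok _ hK.
- split; first by rewrite ann.
    by case/fset0Pn: h_ne => x /obl_lift[x' x'h _]; apply/fset0Pn; exists x'.
  move=> x' /lift_obl[x /obl_sub[c [xc lc nvar]] [-> x'x]]; exists c; rewrite ann.
  by split=> //; apply: (@catI _ (gcp K)); rewrite x'x xc -pos_ann catA.
- move=> /lift_obl[x xh [_ x'x]] lR; apply/in_liftK; exists (fresh_goal l x.2).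
    apply: (dclasses_ddep_closed KD hK); first exact: (deriv_fresh_closed sok (Kderiv _ hK)).
    apply/fset0Pn; exists x.2; rewrite in_fsetI posm_fresh_goal eqxx andbT.
    by apply/posmP; exists x.1; case: (x) xh.
  by rewrite lift_fresh_goal -x'x drop_size_cat.
Qed.

Lemma reachable_state_ok s : is_trs arity R -> reachable arity lab R s -> state_ok s.
Proof.
move=> trsR; elim=> [|s1 f s' p' _ s1ok s'delta]; last exact: (delta_state_ok _ s1ok s'delta).
split; first by move=> _ /imfsetP[l lR ->]; exact: fresh_goal_ok.
move=> _ x l /imfsetP[l' _ ->] /in_fresh_goal-> lR /=.
by apply/imfsetP; exists l.
Qed.

End Automaton.

Section Coverage.
Variables (F : finType) (V : countType) (arity : F -> nat).
Variables (lab : state F V -> pos) (R : {fset rule F V}).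
Hypothesis trsR : is_trs arity R.
Notation term := (term F V).
Notation goal := (goal F V).
Notation state := (state F V).
Notation redex := (redex F V).
Notation reduce := (reduce arity).
Notation deriv := (deriv arity lab R).
Notation delta := (delta arity lab R).
Notation out := (out arity lab R).
Notation matches := (matches arity lab R).
Notation state_ok := (state_ok R).

Lemma in_out s f rl a : (rl, a) \in out s f <->
  rl \in R /\ exists2 g, g \in s &
    [/\ g.2.1 = rl.1, a = g.2.2 &
        exists2 y, y \in g.1 & [/\ g.1 = [fset y], y.2 = lab s & flat arity f y.1]].
Proof.
rewrite /out in_fset; split.
- case/allpairsPdep => rl' [g [rR]]; rewrite mem_filter.
  case/andP=> /andP[/eqP gl /hasP[y yg /andP[/andP[/eqP gy /eqP ylab] yflat]]] gs [eq_rl eq_a].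
  by subst rl' a; split=> //; exists g => //; split => //; exists y.
- case=> rR [g gs [gl -> [y yg [gy ylab yflat]]]]; apply/allpairsPdep; exists rl, g.
  rewrite mem_filter gs gl eqxx andbT /=; split=> //; apply/hasP; exists y => //.
  by rewrite gy ylab yflat !eqxx.
Qed.

Lemma in_matches s q t rd : rd \in matches s q t <->
  exists f, head_at t (q ++ lab s) = Some f /\
            exists2 ra, ra \in out s f & rd = (ra.1, q ++ ra.2).
Proof.
rewrite /matches /head_at; case: obind => [f|]; last by split=> [|[f []]]; rewrite ?inE.
split; first by case/imfsetP => ra raf ->; exists f; split => //; exists ra.
by case=> _ [[<-] [ra raf ->]]; apply/imfsetP; exists ra.
Qed.

Definition goal_covers (q : pos) (h : goal) (rd : redex) : Prop :=
  (h.2.1 = rd.1.1 /\ q ++ h.2.2 = rd.2) \/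
  exists x i rest, x \in h.1 /\ rd.2 = q ++ x.2 ++ i :: rest.

Definition config_covers (y : state * pos) (rd : redex) : Prop :=
  exists2 g, g \in y.1 & goal_covers y.2 g rd.

Lemma delta_covers s f q h rd : state_ok s -> h \in deriv s f -> goal_covers q h rd ->
  exists2 y, y \in delta s f & config_covers (y.1, q ++ y.2) rd.
Proof.
move=> sok hD cov; have [K KD hK] := dclasses_cover hD.
exists (Defs.liftK K, gcp K); first by apply/in_delta; exists K.
have [ann pos_ann _ obl_lift] := lift_goal_spec (deriv_goal_ok trsR sok hD) (gcp_prefix hK).
exists (lift_goal (size (gcp K)) h); first by apply/in_liftK; exists h.
case: cov => [[hl hp]|[x [i [rest [xh rdp]]]]]; first by left; rewrite ann -catA pos_ann.
have [x' x'h [_ x'x]] := obl_lift _ xh.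
by right; exists x', i, rest; rewrite rdp -x'x !catA.
Qed.

Lemma delta_covers_inv s f q y rd : state_ok s -> y \in delta s f ->
  config_covers (y.1, q ++ y.2) rd -> exists2 h, h \in deriv s f & goal_covers q h rd.
Proof.
move=> sok /in_delta[K KD ->] [_ /= /in_liftK[h hK ->] cov].
have hD : h \in deriv s f := dclasses_sub KD hK.
have [ann pos_ann lift_obl _] := lift_goal_spec (deriv_goal_ok trsR sok hD) (gcp_prefix hK).
exists h => //; case: cov => [[hl hp]|[x' [i [rest [x'h rdp]]]]].
  by left; rewrite -ann -pos_ann catA.
have [x xh [_ x'x]] := lift_obl _ x'h.
by right; exists x, i, rest; rewrite rdp -x'x !catA.
Qed.

Lemma deriv_covers_parent s f q h rd : (exists2 g, g \in s & lab s \in posm g.1) ->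
  h \in deriv s f -> goal_covers q h rd -> config_covers (s, q) rd.
Proof.
case=> g0 g0s /posmP[u0 u0g0].
have below_lab i rest : rd.2 = q ++ lab s ++ i :: rest -> config_covers (s, q) rd.
  by move=> rdp; exists g0 => //; right; exists (u0, lab s), i, rest.
case/in_deriv => [[g gs [_ _ ->]]|[[hs _]|[l [i [_ _ ->]]]]] cov.
- case: cov => [cov|[x [i [rest [/in_reduce xg rdp]]]]]; first by exists g => //; left.
  case: xg => [[xg _]|[y [u [i' [_ _ _ _ [_ xy]]]]]].
    by exists g => //; right; exists x, i, rest.
  by apply: (below_lab i' (i :: rest)); rewrite rdp xy -catA.
- by exists h.
- case: cov => [[_ rdp]|[x [i' [rest [/in_fresh_goal xl rdp]]]]].
    by apply: (below_lab i [::]); rewrite -rdp.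
  by apply: (below_lab i (i' :: rest)); rewrite rdp xl -catA.
Qed.

Lemma matches_covers s q t rd : rd \in matches s q t -> config_covers (s, q) rd.
Proof.
case/in_matches=> f [_ [[rl a] /in_out[_ [g gs [gl -> _]]] ->]].
by exists g => //; left.
Qed.

Lemma s0_covers rd : rd.1 \in R -> config_covers (s0 R, [::]) rd.
Proof.
move=> rR; exists (fresh_goal rd.1.1 [::]).
  by apply/imfsetP; exists rd.1.1 => //; exact: lhss_of.
case E: rd.2 => [|i rest]; [by left | right].
by exists (rd.1.1, [::]), i, rest; rewrite inE.
Qed.

Lemma out_of_reduce_empty s g f us rl : state_ok s -> g \in s -> rl \in R ->
  g.2.1 = rl.1 -> (App f us, lab s) \in g.1 -> reduce g.1 f (lab s) = fset0 ->
  (rl, g.2.2) \in out s f.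
Proof.
move=> [sok _] gs rR gl fg red0; apply/in_out; split=> //; exists g => //; split=> //.
exists (App f us, lab s) => //; split=> //.
  apply/fsetP => z; rewrite inE; apply/idP/eqP => [zg|->//].
  have [zlab|] := eqVneq z.2 (lab s); first exact: (goal_ok_inj (sok _ gs)).
  move=> zlab; have : z \in reduce g.1 f (lab s) by apply/in_reduce; left.
  by rewrite red0 in_fset0.
have [gR _ obl_sub] := sok _ gs; have [c [_ lc _]] := obl_sub _ fg.
have /= /andP[size_us _] := subterm_wf (proj2 (lhs_nvar_wf trsR gR)) lc.
rewrite /flat eqxx size_us /=; apply/(all_nthP (App f us)) => k kus.
apply/negPn/negP => nvar; suff : (nth (App f us) us k, lab s ++ [:: k.+1]) \in fset0 by [].
rewrite -red0; apply/in_reduce; right; exists (App f us, lab s), (nth (App f us) us k), k.+1.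
split=> //; first by rewrite mem_iota add1n !ltnS -(eqP size_us) kus.
by rewrite /= kus.
Qed.

Lemma grow_complete_announced s q t f args g rd sigma : state_ok s -> g \in s ->
  rd.1 \in R -> subterm t rd.2 = Some (subst sigma rd.1.1) ->
  g.2.1 = rd.1.1 -> q ++ g.2.2 = rd.2 -> subterm t (q ++ lab s) = Some (App f args) ->
  rd \in matches s q t \/ exists2 h, h \in deriv s f & goal_covers q h rd.
Proof.
move=> [sok s_fresh] gs rR t_rd gl gp t_lab.
have [lab_g|] := boolP (lab s \in posm g.1); last first.
  by move=> lab_g; right; exists g; [apply/in_deriv; right; left | left].
case/posmP: lab_g => u ug; have [_ _ obl_sub] := sok _ gs; have [c [labc lc nvar]] := obl_sub _ ug.
have : subterm t (q ++ lab s) = Some (subst sigma u).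
  rewrite /= in labc; rewrite labc catA gp subterm_cat t_rd /=.
  by apply: subterm_subst; rewrite -gl.
case: u ug lc nvar {labc} => [//|f' us] ug lc _; rewrite t_lab => -[eq_f _]; subst f'.
have has_f : has (fun x => (x.2 == lab s) && (hd x.1 == Some f)) (enum_fset g.1).
  by apply/hasP; exists (App f us, lab s); rewrite //= !eqxx.
have [red0|red_ne] := eqVneq (reduce g.1 f (lab s)) fset0.
  left; apply/in_matches; exists f; split; first by rewrite /head_at t_lab.
  exists (rd.1, g.2.2); first exact: (out_of_reduce_empty (conj sok s_fresh) gs rR gl ug red0).
  by rewrite /= gp; case: (rd).
by right; exists (reduce g.1 f (lab s), g.2); [apply/in_deriv; left; exists g | left].
Qed.

Lemma grow_complete_below s q (t : term) f args g x i rest rd : state_ok s -> wf arity t ->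
  g \in s -> x \in g.1 -> rd.1 \in R -> subterm t rd.2 <> None ->
  rd.2 = q ++ x.2 ++ i :: rest -> subterm t (q ++ lab s) = Some (App f args) ->
  exists2 h, h \in deriv s f & goal_covers q h rd.
Proof.
move=> [_ s_fresh] wf_t gs xg rR t_rd rdp t_lab; have lR := lhss_of rR.
have [xlab|xlab] := eqVneq x.2 (lab s); last first.
  exists (fresh_goal rd.1.1 x.2).
    by apply/in_deriv; right; left; rewrite posm_fresh_goal eq_sym xlab (s_fresh g).
  by right; exists (rd.1.1, x.2), i, rest; rewrite inE.
move: t_rd; rewrite rdp xlab catA subterm_cat t_lab /=; case: ifP => // /andP[i0 ile] _.
have /= /andP[/eqP size_args _] := subterm_wf wf_t t_lab.
exists (fresh_goal rd.1.1 (lab s ++ [:: i])).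
  by apply/in_deriv; right; right; exists rd.1.1, i; rewrite mem_iota add1n ltnS -size_args ile i0.
case: rest rdp => [|j rest] rdp; first by left; rewrite rdp xlab catA.
by right; exists (rd.1.1, lab s ++ [:: i]), j, rest; rewrite inE rdp xlab -!catA.
Qed.

Lemma grow_complete s q t f args rd : state_ok s -> wf arity t -> is_redex R t rd ->
  config_covers (s, q) rd -> subterm t (q ++ lab s) = Some (App f args) ->
  rd \in matches s q t \/ exists2 h, h \in deriv s f & goal_covers q h rd.
Proof.
move=> sok wf_t [rR [sigma t_rd]] [g /= gs [[gl gp]|[x [i [rest [xg rdp]]]]]] t_lab.
  exact: grow_complete_announced t_rd gl gp t_lab.
by right; apply: grow_complete_below xg rR _ rdp t_lab; rewrite ?t_rd.
Qed.

End Coverage.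

Section Agreement.
Variables (F : finType) (V : countType) (arity : F -> nat).
Variables (lab : state F V -> pos) (R : {fset rule F V}).
Hypothesis trsR : is_trs arity R.
Notation term := (term F V).
Notation goal := (goal F V).
Notation state := (state F V).
Notation reduce := (reduce arity).
Notation deriv := (deriv arity lab R).
Notation delta := (delta arity lab R).
Notation matches := (matches arity lab R).
Notation state_ok := (state_ok R).

(* [A] records the positions of [t] whose head symbols were inspected on the
   way from the root of the configuration tree to a configuration at offset [q]. *)
Definition goal_agrees (t : term) (A : seq pos) (q : pos) (g : goal) : Prop :=
  (forall x, x \in g.1 -> q ++ x.2 = [::] \/ exists y i, q ++ x.2 = rcons y i /\ y \in A) /\
  (forall c u, subterm g.2.1 c = Some u -> ~~ is_var u ->
     (q ++ g.2.2 ++ c \in A /\ head_at t (q ++ g.2.2 ++ c) = hd u) \/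
     exists c1 c2, c = c1 ++ c2 /\ g.2.2 ++ c1 \in posm g.1).

Definition state_agrees (t : term) (A : seq pos) (s : state) (q : pos) : Prop :=
  forall g, g \in s -> goal_agrees t A q g.

Lemma goal_agrees_sub t A B q g : {subset A <= B} -> goal_agrees t A q g -> goal_agrees t B q g.
Proof.
move=> sAB [obl_pos ann_pos]; split=> [x /obl_pos|c u lc nvar].
  by case=> [|[y [i [-> /sAB yB]]]]; [left | right; exists y, i].
by case: (ann_pos c u lc nvar) => [[/sAB ? ?]|]; [left|right].
Qed.

Lemma state_agrees_replace t A s q p u : state_agrees t A s q ->
  {in A, forall y, ~~ prefix p y} -> subterm t p <> None ->
  state_agrees (replace t p u) A s q.
Proof.
move=> sA A_p t_p g gs; have [obl_pos ann_pos] := sA g gs; split=> // c v lc nvar.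
case: (ann_pos c v lc nvar) => [[cA <-]|]; last by right.
by left; rewrite head_at_replace ?A_p.
Qed.

Lemma reduce_goal_agrees s q t A f args g : state_ok s -> g \in s -> goal_agrees t A q g ->
  subterm t (q ++ lab s) = Some (App f args) ->
  has (fun x => (x.2 == lab s) && (hd x.1 == Some f)) (enum_fset g.1) ->
  goal_agrees t (rcons A (q ++ lab s)) q (reduce g.1 f (lab s), g.2).
Proof.
move=> [sok _] gs gA t_lab /hasP[y yg /andP[/eqP ylab /eqP yf]].
have [obl_pos ann_pos] := goal_agrees_sub (subset_rcons (q ++ lab s)) gA.
have [gR _ obl_sub] := sok _ gs.
split=> /= [x /in_reduce[[xg _]|[z [v [i [_ zlab _ _ [_ ->]]]]]]|c u lc nvar].
- exact: obl_pos.
- by right; exists (q ++ lab s), i; rewrite -zlab catA cats1 mem_rcons mem_head.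
case: (ann_pos c u lc nvar) => [|[c1 [c2 [cc /posmP[u1 u1g]]]]]; first by left.
subst c.
have [c1lab|c1lab] := eqVneq (g.2.2 ++ c1) (lab s); last first.
  by right; exists c1, c2; split=> //; apply/posmP; exists u1; apply/in_reduce; left.
have [c' [/= /catI c'c1 lc1 _]] := obl_sub _ u1g; subst c'.
have yu1 : y = (u1, g.2.2 ++ c1) by apply: (goal_ok_inj (sok _ gs)); rewrite ?ylab.
rewrite yu1 /= in yf; move: lc; rewrite subterm_cat lc1 /=.
case: c2 => [[<-]|i c3].
  by left; rewrite cats0 c1lab /head_at t_lab mem_rcons mem_head.
case: u1 u1g lc1 yf {yu1} => [//|f' us] u1g lc1 [eq_f]; subst f'.
have /= /andP[/eqP size_us _] := subterm_wf (proj2 (lhs_nvar_wf trsR gR)) lc1.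
case: ifP => // /andP[i0 ile]; set v := nth _ us i.-1 => vc3.
have nvar_v : ~~ is_var v by case: (v) vc3 nvar => [x|//]; case: c3 => [[<-]|].
right; exists (c1 ++ [:: i]), c3; rewrite -catA; split=> //.
apply/posmP; exists v; apply/in_reduce; right; exists (App f us, lab s), v, i.
by rewrite -c1lab catA mem_iota add1n ltnS -size_us ile i0 /= i0 ile.
Qed.


Lemma deriv_agrees s q t A f args h : state_ok s -> state_agrees t A s q ->
  subterm t (q ++ lab s) = Some (App f args) -> h \in deriv s f ->
  goal_agrees t (rcons A (q ++ lab s)) q h.
Proof.
move=> sok sA t_lab; case/in_deriv => [[g gs [has_f _ ->]]|[[hs _]|[l [i [_ _ ->]]]]].
- exact: (reduce_goal_agrees sok gs (sA g gs) t_lab has_f).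
- exact: goal_agrees_sub (subset_rcons (q ++ lab s)) (sA h hs).
split=> [x /in_fresh_goal-> | c u _ _] /=.
  by right; exists (q ++ lab s), i; rewrite catA cats1 mem_rcons mem_head.
by right; exists [::], c; rewrite cats0 posm_fresh_goal.
Qed.

Lemma delta_agrees s q t A f args y : state_ok s -> state_agrees t A s q ->
  subterm t (q ++ lab s) = Some (App f args) -> y \in delta s f ->
  state_agrees t (rcons A (q ++ lab s)) y.1 (q ++ y.2).
Proof.
move=> sok sA t_lab /in_delta[K KD ->] _ /= /in_liftK[h hK ->].
have hD : h \in deriv s f := dclasses_sub KD hK.
have [ann pos_ann lift_obl obl_lift] := lift_goal_spec (deriv_goal_ok trsR sok hD) (gcp_prefix hK).
have [obl_pos ann_pos] := deriv_agrees sok sA t_lab hD.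
split=> [x' /lift_obl[x xh [_ x'x]] | c u].
  by rewrite -catA x'x; exact: obl_pos.
rewrite ann => lc nvar; case: (ann_pos c u lc nvar) => [|[c1 [c2 [cc /posmP[u1 u1h]]]]].
  by rewrite -catA (catA (gcp K)) pos_ann; left.
right; exists c1, c2; split=> //; have [x' x'h [_ x'x]] := obl_lift _ u1h.
apply/posmP; exists x'.1; rewrite (_ : _ ++ c1 = x'.2); first by case: (x') x'h.
by apply: (@catI _ (gcp K)); rewrite x'x catA pos_ann.
Qed.

Lemma flat_hd f (u : term) : flat arity f u -> hd u = Some f.
Proof. by case: u => [//|f' us] /= /andP[/andP[/eqP-> _] _]. Qed.

Lemma matches_sound s q t A rd : state_ok s -> state_agrees t A s q -> rd \in matches s q t ->
  rd.1 \in R /\ forall c u, subterm rd.1.1 c = Some u -> ~~ is_var u ->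
    rd.2 ++ c \in rcons A (q ++ lab s) /\ head_at t (rd.2 ++ c) = hd u.
Proof.
move=> [sok _] sA /in_matches[f [t_lab [[rl a] /in_out[rR [g gs [gl -> y_obl]]] ->]]].
case: y_obl => y yg [gy ylab yflat].
split=> // c u /= lc nvar; rewrite -gl in lc.
have [_ ann_pos] := sA g gs.
case: (ann_pos c u lc nvar) => [[cA head_c]|[c1 [c2 [cc /posmP[u1 u1g]]]]].
  by rewrite -catA; split=> //; exact: subset_rcons.
have := u1g; rewrite gy inE => /eqP yu1; subst y c; rewrite /= in ylab yflat.
have [_ _ obl_sub] := sok _ gs; have [c' [/= /catI c'c1 lc1 _]] := obl_sub _ u1g.
subst c'; move: lc; rewrite subterm_cat lc1 /=; case: c2 => [[<-]|i c3].
  by rewrite cats0 -catA ylab t_lab (flat_hd yflat) mem_rcons mem_head.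
case: u1 yflat {u1g lc1 gy yg} => [//|f' us] /= /andP[_ /allP us_var].
case: ifP => // /andP[i0 ile]; have : is_var (nth (App f' us) us i.-1).
  by apply/us_var/mem_nth; rewrite prednK.
by case: (nth _ _ _) => [x|//] _; case: c3 => [[xu]|//]; rewrite -xu in nvar.
Qed.

Lemma is_redex_of_heads t rd : left_linear R -> wf arity t -> rd.1 \in R ->
  (forall c u, subterm rd.1.1 c = Some u -> ~~ is_var u -> head_at t (rd.2 ++ c) = hd u) ->
  is_redex R t rd.
Proof.
move=> linR wf_t rR heads; split=> //.
have [nvar_l wf_l] := lhs_nvar_wf trsR (lhss_of rR).
have := heads [::] _ erefl nvar_l; rewrite cats0 /head_at.
case t_rd: (subterm t rd.2) => [u|] /=; last by case: (rd.1.1) nvar_l.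
move=> _; have [|sigma ->] := linear_match_heads (linR _ rR) wf_l (subterm_wf wf_t t_rd).
  by move=> c v lc nvar; rewrite -(heads c v lc nvar) /head_at subterm_cat t_rd.
by exists sigma.
Qed.

End Agreement.

Section CtreeEncoding.
Variables (F : finType) (V : countType).

Fixpoint ctree_enc (c : ctree F V) : GenTree.tree (state F V * pos) :=
  match c with
  | Bud s p => GenTree.Node 0 [:: GenTree.Leaf (s, p)]
  | Node s p cs => GenTree.Node 1 (GenTree.Leaf (s, p) :: map ctree_enc cs)
  end.

Fixpoint ctree_dec (u : GenTree.tree (state F V * pos)) : option (ctree F V) :=
  match u with
  | GenTree.Node 0 [:: GenTree.Leaf (s, p)] => Some (Bud s p)
  | GenTree.Node 1 (GenTree.Leaf (s, p) :: us) => Some (Node s p (pmap ctree_dec us))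
  | _ => None
  end.

Lemma ctree_encK : pcancel ctree_enc ctree_dec.
Proof.
rewrite /pcancel; fix IH 1 => -[s p|s p cs] //=; congr (Some (Node s p _)).
by elim: cs => //= c cs IHcs; rewrite IH IHcs.
Qed.

End CtreeEncoding.

HB.instance Definition _ (F : finType) (V : countType) :=
  Equality.copy (ctree F V) (pcan_type (@ctree_encK F V)).

Section ConfigurationTrees.
Variables (F : finType) (V : countType) (arity : F -> nat).
Variables (lab : state F V -> pos) (R : {fset rule F V}).
Hypothesis trsR : is_trs arity R.
Hypothesis labR : label_ok arity lab R.
Notation term := (term F V).
Notation state := (state F V).
Notation ctree := (ctree F V).
Notation delta := (delta arity lab R).
Notation matches := (matches arity lab R).
Notation reachable := (reachable arity lab R).
Notation grow := (grow arity lab R).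
Notation prune := (prune lab).
Notation state_agrees := (@state_agrees F V).

Lemma ctree_ind_in (P : ctree -> Prop) :
  (forall s q, P (Bud s q)) ->
  (forall s q cs, (forall c, c \in cs -> P c) -> P (Node s q cs)) ->
  forall c, P c.
Proof.
move=> PBud PNode; fix IH 1 => -[s q|s q cs]; first exact: PBud.
apply: PNode; elim: cs => [|c cs IHcs] c'; first (rewrite in_nil => /notF []).
by rewrite inE => /predU1P[->|/IHcs //]; exact: IH.
Qed.

Definition ct_root (c : ctree) : state * pos :=
  match c with Bud s q => (s, q) | Node s q _ => (s, q) end.

Lemma ct_root_grow s p f c : ct_root (grow s p f c) = ct_root c.
Proof. by case: c => [s' p'|s' p' cs] //=; case: ifP => // /andP[/eqP-> /eqP->]. Qed.

Lemma ct_root_prune p c : ct_root (prune p c) = ct_root c.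
Proof. by case: c => [s' p'|s' p' cs] //=; case: ifP. Qed.

Inductive ct_ok (t : term) : seq pos -> ctree -> Prop :=
| ct_ok_bud A s q : reachable s -> state_agrees t A s q -> ct_ok t A (Bud s q)
| ct_ok_node A s q cs f args : reachable s -> state_agrees t A s q ->
    subterm t (q ++ lab s) = Some (App f args) ->
    map ct_root cs =i [seq (y.1, q ++ y.2) | y <- enum_fset (delta s f)] ->
    (forall c, c \in cs -> ct_ok t (rcons A (q ++ lab s)) c) ->
    ct_ok t A (Node s q cs).

Lemma ct_ok_nodeP t A s q cs : ct_ok t A (Node s q cs) ->
  exists f args, [/\ reachable s, state_agrees t A s q,
    subterm t (q ++ lab s) = Some (App f args),
    map ct_root cs =i [seq (y.1, q ++ y.2) | y <- enum_fset (delta s f)] &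
    forall c, c \in cs -> ct_ok t (rcons A (q ++ lab s)) c].
Proof. by move=> ok; inversion ok; subst; exists f, args. Qed.

Inductive node_at : seq pos -> ctree -> seq pos -> state -> pos -> Prop :=
| node_at_root A s q cs : node_at A (Node s q cs) A s q
| node_at_child A s q cs c A' s' q' : c \in cs ->
    node_at (rcons A (q ++ lab s)) c A' s' q' -> node_at A (Node s q cs) A' s' q'.

Lemma node_atP A s q cs A' s' q' : node_at A (Node s q cs) A' s' q' ->
  [/\ A' = A, s' = s & q' = q] \/
  exists2 c, c \in cs & node_at (rcons A (q ++ lab s)) c A' s' q'.
Proof. by move=> nd; inversion nd; subst; [left | right; exists c]. Qed.

Lemma node_at_bud A s q A' s' q' : ~ node_at A (Bud s q) A' s' q'.
Proof. by move=> nd; inversion nd. Qed.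

Lemma node_at_ok t A c A' s q : ct_ok t A c -> node_at A c A' s q ->
  reachable s /\ state_agrees t A' s q.
Proof.
move=> ok nd; elim: nd ok => [A0 s0 q0 cs|A0 s0 q0 cs c0 A1 s1 q1 c0cs _ IH]
  /ct_ok_nodeP[f [args [rs sA t_lab _ cs_ok]]]; first by [].
exact/IH/cs_ok.
Qed.

Lemma ct_ok_bud_reachable t A c y : ct_ok t A c -> y \in buds_seq c -> reachable y.1.
Proof.
elim=> [A' s q rs _|A' s q cs f args _ _ _ _ _ IH] /=; first by rewrite inE => /eqP->.
by case/flatten_mapP => c0 c0cs; exact: IH.
Qed.

Lemma buds_grow_other s p f c y : y \in buds_seq c -> y != (s, p) ->
  y \in buds_seq (grow s p f c).
Proof.
elim/ctree_ind_in: c => [s' p'|s' p' cs IH] /=.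
  rewrite inE => /eqP-> neq_sp; case: ifP => [/andP[/eqP s's /eqP p'p]|_]; last by rewrite inE.
  by move: neq_sp; rewrite s's p'p eqxx.
case/flatten_mapP => c ccs yc ys; apply/flatten_mapP; exists (grow s p f c); first exact: map_f.
exact: IH.
Qed.

Lemma buds_grow_delta s p f c z : (s, p) \in buds_seq c -> z \in delta s f ->
  (z.1, p ++ z.2) \in buds_seq (grow s p f c).
Proof.
elim/ctree_ind_in: c => [s' p'|s' p' cs IH] /=.
  rewrite inE => /eqP[<- <-] zD; rewrite !eqxx /=; apply/flatten_mapP.
  by exists (Bud z.1 (p ++ z.2)); rewrite ?inE //; apply/mapP; exists z.
case/flatten_mapP => c ccs spc zD; apply/flatten_mapP; exists (grow s p f c); first exact: map_f.
exact: IH.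
Qed.

Lemma ct_ok_grow t A c s p f args : ct_ok t A c ->
  subterm t (p ++ lab s) = Some (App f args) -> ct_ok t A (grow s p f c).
Proof.
elim=> [A0 s' q' rs sA|A0 s' q' cs f' args' rs sA t_lab roots _ IH] t_p /=.
  case: ifP => [/andP[/eqP s's /eqP q'p]|_]; last exact: ct_ok_bud.
  subst s' q'; apply: (ct_ok_node rs sA t_p) => [y|_ /mapP[z zD ->]]; first by rewrite -map_comp.
  apply: ct_ok_bud; first by case: z zD => s' p' /(reachS rs).
  exact: (delta_agrees trsR (reachable_state_ok trsR rs) sA t_p zD).
apply: (ct_ok_node rs sA t_lab) => [y|_ /mapP[c0 c0cs ->]]; last exact: IH.
by rewrite -map_comp (eq_map (ct_root_grow s p f)).
Qed.

Lemma ct_complete t A c rd : wf arity t -> is_redex R t rd -> ct_ok t A c ->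
  config_covers (ct_root c) rd ->
  (exists A' s q, node_at A c A' s q /\ rd \in matches s q t) \/
  exists2 y, y \in buds_seq c & config_covers y rd.
Proof.
move=> wf_t rd_t; elim=> [A0 s q _ _|A0 s q cs f args rs _ t_lab roots _ IH] /= cov.
  by right; exists (s, q); rewrite ?inE.
have sok := reachable_state_ok trsR rs.
case: (grow_complete trsR sok wf_t rd_t cov t_lab) => [m|[h hD hcov]].
  by left; exists A0, s, q; split=> //; exact: node_at_root.
have [y yD ycov] := delta_covers trsR sok hD hcov.
have /mapP[c0 c0cs c0y] : (y.1, q ++ y.2) \in map ct_root cs by rewrite roots; exact: map_f.
case: (IH c0 c0cs); first by rewrite -c0y.
  by case=> A' [s' [q' [nd m]]]; left; exists A', s', q'; split=> //; exact: node_at_child nd.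
by case=> y' y'c0 y'cov; right; exists y' => //; apply/flatten_mapP; exists c0.
Qed.

Lemma label_in_obligation s : reachable s -> exists2 g, g \in s & lab s \in posm g.1.
Proof. by move/labR=> [g gs /andP[_ lab_g]]; exists g. Qed.

Lemma covers_ct_root t A c y rd : ct_ok t A c ->
  y \in buds_seq c ++ nodes_seq c -> config_covers y rd -> config_covers (ct_root c) rd.
Proof.
elim=> [A0 s q _ _|A0 s q cs f args rs _ _ roots _ IH] /=; first by rewrite inE => /eqP->.
rewrite mem_cat inE orbCA => /orP[/eqP-> //|y_cs ycov].
have [c0 c0cs yc0] : exists2 c0, c0 \in cs & y \in buds_seq c0 ++ nodes_seq c0.
  case/orP: y_cs => /flatten_mapP[c0 ? ?]; exists c0; rewrite // mem_cat.
    by apply/orP; left.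
  by apply/orP; right.
have := IH c0 c0cs yc0 ycov; have : ct_root c0 \in map ct_root cs by exact: map_f.
rewrite roots => /mapP[z zD ->] c0cov.
have [h hD hcov] := delta_covers_inv trsR (reachable_state_ok trsR rs) zD c0cov.
exact: deriv_covers_parent (label_in_obligation rs) hD hcov.
Qed.

Lemma nodes_at_sub p c y : y \in nodes_at lab p c -> y \in nodes_seq c.
Proof.
rewrite /nodes_at in_fset; elim/ctree_ind_in: c => [s q|s q cs IH] /=.
  by case: ifP.
case/flatten_mapP => Z; rewrite mem_cat => /orP[ZN|/flatten_mapP[c ccs Zc]] yZ.
  by move: ZN yZ; case: ifP; rewrite ?inE // => _ /eqP->.
rewrite inE; apply/orP; right; apply/flatten_mapP; exists c => //.
by apply: IH => //; apply/flatten_mapP; exists Z.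
Qed.

Lemma nodes_at_child p s q cs y : q ++ lab s != p ->
  y \in nodes_at lab p (Node s q cs) -> exists2 c, c \in cs & y \in nodes_at lab p c.
Proof.
rewrite /nodes_at in_fset /= => /negbTE-> /flatten_mapP[Z /flatten_mapP[c ccs Zc] yZ].
by exists c; rewrite // in_fset; apply/flatten_mapP; exists Z.
Qed.

Lemma prune_covers t A c p y rd : ct_ok t A c ->
  y \in buds_seq c \/ y \in nodes_at lab p c -> config_covers y rd ->
  exists2 y', y' \in buds_seq (prune p c) & config_covers y' rd.
Proof.
move=> c_ok; elim: c_ok y => [A0 s q _ _|A0 s q cs f args rs sA t_lab roots cs_ok IH] y.
  case=> [yb ycov|]; first by exists y.
  by rewrite /nodes_at in_fset /=; case: ifP.
move=> y_c ycov /=; case: ifP => [_|lab_p].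
  exists (s, q); rewrite ?inE //.
  have c_ok : ct_ok t A0 (Node s q cs) by exact: ct_ok_node t_lab roots cs_ok.
  apply: covers_ct_root c_ok _ ycov; rewrite mem_cat.
  by case: y_c => [->|/nodes_at_sub ->]; rewrite ?orbT.
have [c0 c0cs y_c0] : exists2 c0, c0 \in cs & y \in buds_seq c0 \/ y \in nodes_at lab p c0.
  case: y_c => [/flatten_mapP[c0 c0cs yc0]|/(nodes_at_child (negbT lab_p))[c0 c0cs yc0]].
    by exists c0; [|left].
  by exists c0; [|right].
have [y' y'c0 y'cov] := IH c0 c0cs y y_c0 ycov.
by exists y' => //; apply/flatten_mapP; exists (prune p c0); rewrite ?map_f.
Qed.

Lemma label_not_prefix t A s q p : reachable s -> state_agrees t A s q ->
  {in A, forall y, ~~ prefix p y} -> q ++ lab s != p -> ~~ prefix p (q ++ lab s).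
Proof.
move=> rs sA A_p lab_p; have [g gs /posmP[u ug]] := label_in_obligation rs.
have [obl_pos _] := sA g gs.
case: (obl_pos _ ug) => /= [qlab|[y [i [qlab yA]]]]; rewrite qlab in lab_p *.
  by rewrite prefixs0 eq_sym.
apply/negP => /prefix_rcons_inv[p_lab|py]; last by move: (A_p y yA); rewrite py.
by move: lab_p; rewrite p_lab eqxx.
Qed.

Lemma ct_ok_prune t A c p u : ct_ok t A c -> {in A, forall y, ~~ prefix p y} ->
  subterm t p <> None -> ct_ok (replace t p u) A (prune p c).
Proof.
elim=> [A0 s q rs sA|A0 s q cs f args rs sA t_lab roots _ IH] A_p t_p /=.
  by apply: (ct_ok_bud rs); exact: state_agrees_replace.
have sA' := state_agrees_replace u sA A_p t_p.
case: ifP => [_|/negbT lab_p]; first exact: ct_ok_bud.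
have := head_at_replace u t_p (label_not_prefix rs sA A_p lab_p).
rewrite /head_at t_lab; case t'_lab: subterm => [[x|f' args']|] //= [eq_f]; subst f'.
apply: (ct_ok_node rs sA' t'_lab) => [y|_ /mapP[c0 c0cs ->]].
  by rewrite -map_comp (eq_map (ct_root_prune p)).
apply: IH => // z; rewrite mem_rcons inE => /predU1P[->|]; last exact: A_p.
exact: (label_not_prefix rs sA A_p lab_p).
Qed.

Lemma node_at_prune t A c p A' s q : ct_ok t A c -> {in A, forall y, ~~ prefix p y} ->
  node_at A (prune p c) A' s q -> node_at A c A' s q /\ ~~ prefix p (q ++ lab s).
Proof.
move=> c_ok; elim: c_ok A' s q => [A0 s0 q0 _ _|A0 s0 q0 cs f args rs sA _ _ _ IH] A' s q A_p /=.
  by move/node_at_bud.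
case: ifP => [_ /node_at_bud //|/negbT lab_p].
have p_lab := label_not_prefix rs sA A_p lab_p.
case/node_atP => [[-> -> ->]|[_ /mapP[c0 c0cs ->] nd]]; first by split=> //; exact: node_at_root.
have A_p' : {in rcons A0 (q0 ++ lab s0), forall y, ~~ prefix p y}.
  by move=> z; rewrite mem_rcons inE => /predU1P[->|/A_p].
by have [nd' ?] := IH c0 c0cs A' s q A_p' nd; split=> //; exact: node_at_child nd'.
Qed.

End ConfigurationTrees.

Section Normalize.
Variables (F : finType) (V : countType) (arity : F -> nat).
Variables (lab : state F V -> pos) (R : {fset rule F V}).
Variable select : ctree F V -> {fset redex F V} -> option (action F V).
Hypothesis trsR : is_trs arity R.
Hypothesis linR : left_linear R.
Hypothesis labR : label_ok arity lab R.
Hypothesis selR : is_strategy select.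
Notation term := (term F V).
Notation redex := (redex F V).
Notation ctree := (ctree F V).
Notation matches := (matches arity lab R).
Notation grow := (grow arity lab R).
Notation prune := (prune lab).
Notation ct_ok := (ct_ok arity lab R).
Notation node_at := (node_at lab).

Lemma wf_rewrite (t : term) l r p sigma : wf arity t -> (l, r) \in R ->
  subterm t p = Some (subst sigma l) -> wf arity (replace t p (subst sigma r)).
Proof.
move=> wf_t /trsR.2[_ _ wf_r vars_r] t_p; apply: wf_replace => //.
by apply: wf_subst => // x /vars_r; exact: wf_subst_var (subterm_wf wf_t t_p).
Qed.

Lemma matches_rule s q t rd : rd \in matches s q t -> rd.1 \in R.
Proof. by case/in_matches => f [_ [[rl a] /in_out[]]] rR _ ->. Qed.

Lemma matches_head_at s q (t t' : term) : head_at t' (q ++ lab s) = head_at t (q ++ lab s) ->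
  matches s q t' = matches s q t.
Proof. by rewrite /matches /head_at => ->. Qed.

Definition loop_inv (m : mstate F V) : Prop :=
  let: (t, reds, c) := m in
  [/\ ct_ok t [::] c, ct_root c = (s0 R, [::]), wf arity t, {in reds, forall rd, rd.1 \in R} &
      forall rd, is_redex R t rd ->
        rd \in reds \/ exists2 y, y \in buds_seq c & config_covers y rd].

Lemma init_loop_inv t0 : wf arity t0 -> loop_inv (t0, fset0, Bud (s0 R) [::]).
Proof.
move=> wf_t0; split=> // [|rd [rR _]]; last first.
  by right; exists (s0 R, [::]); [rewrite inE | exact: s0_covers].
apply: ct_ok_bud; first exact: reach0.
move=> _ /imfsetP[l _ ->]; split=> [x /in_fresh_goal-> | c u _ _]; first by left.
by right; exists [::], c; rewrite posm_fresh_goal.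
Qed.

Lemma grow_loop_inv t reds c s p f args : loop_inv (t, reds, c) ->
  select c reds = Some (AConf s p) -> subterm t (p ++ lab s) = Some (App f args) ->
  loop_inv (t, reds `|` matches s p t, grow s p f c).
Proof.
move=> [c_ok root wf_t redsR covered] sel t_lab.
have spc : (s, p) \in buds_seq c by have := selR.1 _ _ _ sel; rewrite /= in_fset.
split=> //; first exact: (ct_ok_grow trsR c_ok t_lab).
- by rewrite ct_root_grow.
- by move=> rd; rewrite in_fsetU => /orP[/redsR|/matches_rule].
move=> rd rd_t; case: (covered rd rd_t) => [rd_reds|[y yc ycov]].
  by left; rewrite in_fsetU rd_reds.
have [y_sp|y_sp] := eqVneq y (s, p); last by right; exists y => //; exact: buds_grow_other.
subst y; have sok := reachable_state_ok trsR (ct_ok_bud_reachable c_ok yc).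
case: (grow_complete trsR sok wf_t rd_t ycov t_lab) => [m|[h hD hcov]].
  by left; rewrite in_fsetU m orbT.
have [z zD zcov] := delta_covers trsR sok hD hcov.
by right; exists (z.1, p ++ z.2) => //; exact: buds_grow_delta.
Qed.

Lemma pruned_match_is_redex t c p u A' s q rd : wf arity t -> ct_ok t [::] c ->
  subterm t p <> None -> node_at [::] (prune p c) A' s q ->
  rd \in matches s q (replace t p u) -> is_redex R t rd.
Proof.
move=> wf_t c_ok t_p nd m; have nil_p : {in [::], forall y : pos, ~~ prefix p y} by [].
have [nd_c p_lab] := node_at_prune labR c_ok nil_p nd.
have [rs sA] := node_at_ok c_ok nd_c.
rewrite (matches_head_at (t := t)) ?head_at_replace // in m.
have [rR heads] := matches_sound (reachable_state_ok trsR rs) sA m.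
by apply: (is_redex_of_heads trsR) => // c' v lc nvar; case: (heads c' v lc nvar).
Qed.

Lemma prune_covered t reds c p rd : ct_ok t [::] c ->
  rd \in reds \/ (exists2 y, y \in buds_seq c & config_covers y rd) ->
  rd \in reds `\` \bigcup_(x <- enum_fset (nodes_at lab p c)) matches x.1 x.2 t \/
  exists2 y, y \in buds_seq (prune p c) & config_covers y rd.
Proof.
move=> c_ok [rd_reds|[y yc ycov]]; last first.
  by right; exact: (prune_covers trsR labR c_ok (or_introl yc) ycov).
have [|removed] := boolP (rd \in \bigcup_(x <- enum_fset (nodes_at lab p c)) matches x.1 x.2 t).
  case/bigfcupP => -[s q] /andP[sq_p _] /= m; right.
  exact: (prune_covers trsR labR c_ok (or_intror sq_p) (matches_covers m)).
by left; rewrite in_fsetD rd_reds removed.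
Qed.

Lemma rewrite_loop_inv t reds c l r p sigma : loop_inv (t, reds, c) ->
  select c reds = Some (ARed ((l, r), p)) -> subterm t p = Some (subst sigma l) ->
  loop_inv (replace t p (subst sigma r),
            reds `\` \bigcup_(x <- enum_fset (nodes_at lab p c)) matches x.1 x.2 t,
            prune p c).
Proof.
move=> [c_ok root wf_t redsR covered] sel t_p.
have rR : (l, r) \in R := redsR _ (selR.1 _ _ _ sel).
have t_p' : subterm t p <> None by rewrite t_p.
have nil_p : {in [::], forall y : pos, ~~ prefix p y} by [].
have c'_ok := ct_ok_prune labR (subst sigma r) c_ok nil_p t_p'.
split=> //; first by rewrite ct_root_prune.
- exact: wf_rewrite wf_t rR t_p.
- by move=> rd; rewrite in_fsetD => /andP[_ /redsR].
move=> rd rd_t'; have rd_cov : config_covers (ct_root (prune p c)) rd.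
  by rewrite ct_root_prune root; exact/s0_covers/rd_t'.1.
have wf_t' := wf_rewrite wf_t rR t_p.
case: (ct_complete trsR wf_t' rd_t' c'_ok rd_cov) => [[A' [s [q [nd m]]]]|]; last by right.
exact/prune_covered/covered/(pruned_match_is_redex wf_t c_ok t_p' nd m).
Qed.

Lemma nstep_loop_inv m m' : nstep arity lab R select m m' -> loop_inv m ->
  loop_inv m' /\ clos_refl_trans _ (rstep R) m.1.1 m'.1.1.
Proof.
case=> [t reds c s p f args _ sel t_lab|t reds c l r p sigma _ sel t_p] inv.
  by split; [exact: grow_loop_inv inv sel t_lab | exact: rt_refl].
split; first exact: rewrite_loop_inv inv sel t_p.
case: inv => _ _ _ redsR _; apply: rt_step; exists (l, r), p, sigma.
by split=> //; exact: (redsR _ (selR.1 _ _ _ sel)).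
Qed.

Lemma run_loop_inv m m' : clos_refl_trans _ (nstep arity lab R select) m m' -> loop_inv m ->
  loop_inv m' /\ clos_refl_trans _ (rstep R) m.1.1 m'.1.1.
Proof.
elim=> [x y /nstep_loop_inv //|x inv|x y z _ IHxy _ IHyz /IHxy[/IHyz[inv_z yz] xy]].
  by split=> //; exact: rt_refl.
by split=> //; exact: rt_trans xy yz.
Qed.

End Normalize.

Theorem corollary1 (F : finType) (V : countType) (arity : F -> nat)
    (R : {fset rule F V}) (lab : state F V -> pos)
    (select : ctree F V -> {fset redex F V} -> option (action F V))
    (t0 t : term F V) :
  is_trs arity R ->
  left_linear R ->
  label_ok arity lab R ->
  wf arity t0 -> ground t0 ->
  is_strategy select ->
  normalize_returns arity lab R select t0 t ->
  clos_refl_trans (term F V) (rstep R) t0 t /\ normal_form R t.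
Proof.
move=> trsR linR labR wf_t0 _ selR [reds [c [run no_buds no_reds]]].
have [[_ _ _ _ covered] t0t] := run_loop_inv trsR linR labR selR run (init_loop_inv lab R wf_t0).
split=> // rd rd_t; case: (covered rd rd_t) => [|[y yc _]]; first by rewrite no_reds.
have : y \in buds c by rewrite inE.
by rewrite no_buds.
Qed.
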